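(* Let $\mathcal{S}$ be a finite elation generalized quadrangle of order $(s,t)$ with elation group $G$ and associated $4$-gonal family $(G,\{A_i\}_{i=0}^t,\{A_i^*\}_{i=0}^t)$. If $s$ does not divide $t$, then $A_i^*G'=A_iG'$ for each $i\in\{0,\dots,t\}$.
   Context: A generalized quadrangle of order $(s,t)$: each line has $s+1$ points, each point is on $t+1$ lines, and for each non-incident point-line pair $(P,\ell)$ there is a unique point on $\ell$ collinear with $P$. An elation about $P$ is an automorphism that is the identity or fixes each line through $P$ and no point not collinear with $P$. $\mathcal{S}$ is an elation generalized quadrangle with base point $P$ and elation group $G$ if $G$ consists of elations about $P$ and acts regularly on the points not collinear with $P$. The associated $4$-gonal family: fix a point $y$ not collinear with $P$, let $M_0,\dots,M_t$ be the lines through $y$, let $z_i$ be the unique point of $M_i$ collinear with $P$, and let $A_i$, $A_i^*$ be the stabilizers in $G$ of $M_i$ and $z_i$ respectively. $G'$ is the derived subgroup of $G$. *)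

From mathcomp Require Import all_boot all_fingroup.
Set Implicit Arguments. Unset Strict Implicit. Unset Printing Implicit Defensive.
Import GroupScope.

Section GQ.
Variables (Point Line : finType) (inc : Point -> Line -> bool).

(* x and y lie on a common line (every point is collinear with itself) *)
Definition collinear (x y : Point) : bool := [exists L, inc x L && inc y L].

Definition is_GQ (s t : nat) : Prop :=
  [/\ forall L : Line, #|[set x | inc x L]| = s.+1,
      forall x : Point, #|[set L | inc x L]| = t.+1,
      forall (x y : Point) (L M : Line),
        x != y -> inc x L -> inc y L -> inc x M -> inc y M -> L = M
    & forall (x : Point) (L : Line), ~~ inc x L ->
        exists! z : Point, inc z L /\ collinear x z].

Definition autT := ({perm Point} * {perm Line})%type.

Definition is_aut (g : autT) : Prop :=
  forall (x : Point) (L : Line), inc (g.1 x) (g.2 L) = inc x L.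

Definition is_elation (P : Point) (g : autT) : Prop :=
  is_aut g /\
  (g = 1 \/ ((forall L, inc P L -> g.2 L = L) /\
             (forall x, ~~ collinear P x -> g.1 x != x))).

Definition is_elation_group (P : Point) (G : {group autT}) : Prop :=
  (forall g, g \in G -> is_elation P g) /\
  (forall x y : Point, ~~ collinear P x -> ~~ collinear P y ->
     exists! g : autT, g \in G /\ g.1 x = y).

Definition stab_pt (G : {group autT}) (z : Point) : {set autT} :=
  [set g in G | g.1 z == z].
Definition stab_line (G : {group autT}) (M : Line) : {set autT} :=
  [set g in G | g.2 M == M].

End GQ.

From mathcomp Require Import all_boot all_algebra all_fingroup all_solvable.
From mathcomp Require Import all_field all_character.
Set Implicit Arguments. Unset Strict Implicit. Unset Printing Implicit Defensive.
Import GroupScope GRing.Theory Num.Theory.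

(* If A_i^* were not contained in A_i G', some linear character f of G would
   be trivial on A_i G' but not on A_i^*; the sums of f over G and over A_i^*
   then vanish, hence so does its sum over G \ A_i^*.  Pick y on M = M_i not
   collinear with P: every element of G \ A_i^* factors uniquely as b a with
   a in A_i and b a nontrivial element of the stabiliser A_N of one of the t
   lines N <> M through y.  As f sums to s = |A_N| or to 0 over each A_N, this
   gives t = sum_N (sum of f over A_N), a multiple of s. *)

Section SumMultiplicative.
Local Open Scope ring_scope.
Variables (gT : finGroupType) (R : idomainType) (K : {group gT}) (f : gT -> R).
Hypothesis fM : {in K &, {morph f : a b / (a * b)%g >-> a * b}}.

Lemma sum_mulfun_nontriv k : k \in K -> f k != 1 -> \sum_(x in K) f x = 0.
Proof.
move=> kK fk1; have: \sum_(x in K) f x = f k * \sum_(x in K) f x.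
  rewrite mulr_sumr (reindex_inj (mulgI k)) /=.
  rewrite (eq_bigl (mem K)) => [|x]; last by rewrite /= groupMl.
  by apply: eq_bigr => x xK; rewrite fM.
move/eqP; rewrite -subr_eq0 -{1}[\sum_(x in K) f x]mul1r -mulrBl mulf_eq0.
by rewrite subr_eq0 eq_sym (negbTE fk1) => /eqP.
Qed.

Lemma sum_mulfun_group :
  \sum_(x in K) f x = (#|K| * [forall k in K, f k == 1])%:R.
Proof.
case: forallP => [f1 | /forallP/forall_inPn[k kK fk1]]; last first.
  by rewrite muln0 (sum_mulfun_nontriv kK fk1).
rewrite muln1 -sumr_const; apply: eq_bigr => k kK.
by apply/eqP; move/implyP: (f1 k); apply.
Qed.

End SumMultiplicative.

Section LinearCharacters.
Local Open Scope ring_scope.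

Lemma linear_char_separates (gT : finGroupType) (G H : {group gT}) x :
  (H <| G)%g -> (G^`(1))%g \subset H -> x \in G -> x \notin H ->
  exists f : gT -> algC,
    [/\ {in G &, {morph f : a b / (a * b)%g >-> a * b}},
        {in H, forall h, f h = 1} & f x != 1].
Proof.
move=> nsHG sG'H xG xH.
have [i sHker xker] : exists2 i : Iirr G, H \subset cfker 'chi_i & x \notin cfker 'chi_i.
  apply/exists_inP; apply: contraR xH => /exists_inPn xker.
  rewrite -(cap_cfker_normal nsHG); apply/bigcapP => i sHker.
  by rewrite -[x \in _]negbK xker.
have lin : 'chi[G]_i \is a linear_char by rewrite lin_irr_der1 (subset_trans sG'H).
exists (fun g => 'chi[G]_i g); split; first exact: lin_charM.
  move=> h hH; have := subsetP sHker h hH; rewrite cfkerEirr inE => /eqP ->.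
  exact: lin_char1.
by move: xker; rewrite cfkerEirr inE lin_char1.
Qed.

End LinearCharacters.

Section ElationQuadrangle.
Variables (Point Line : finType) (inc : Point -> Line -> bool) (s t : nat)
  (P : Point) (G : {group autT Point Line}).
Hypotheses (t_gt0 : (0 < t)%N) (gqS : is_GQ inc s t)
  (elG : is_elation_group inc P G).

Local Notation col := (collinear inc).

Lemma line_unique x w L N :
  x != w -> inc x L -> inc w L -> inc x N -> inc w N -> L = N.
Proof. by case: gqS => _ _ uniqL _; apply: uniqL. Qed.

Lemma collinear_inc x w L : inc x L -> inc w L -> col x w.
Proof. by move=> xL wL; apply/existsP; exists L; rewrite xL wL. Qed.

Lemma collinearP x w : col x w -> exists L, inc x L /\ inc w L.
Proof. by case/existsP=> L /andP[xL wL]; exists L. Qed.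

Lemma collinearC x w : col x w = col w x.
Proof. by apply/idP/idP=> /collinearP[L [? ?]]; apply: (@collinear_inc _ _ L). Qed.

Lemma proj_unique x L a b :
  ~~ inc x L -> inc a L -> col x a -> inc b L -> col x b -> a = b.
Proof.
case: gqS => _ _ _ projL xL aL xa bL xb.
by have [c [_ eq_c]] := projL x L xL; rewrite -(eq_c a) ?(eq_c b).
Qed.

Lemma proj_exists x L : ~~ inc x L -> exists a, inc a L /\ col x a.
Proof. by case: gqS => _ _ _ projL xL; have [c [? _]] := projL x L xL; exists c. Qed.

Lemma elation_inc g x L : g \in G -> inc (g.1 x) (g.2 L) = inc x L.
Proof. by case: elG => elation _ gG; case: (elation g gG). Qed.

Lemma elation_collinear g x w : g \in G -> col (g.1 x) (g.1 w) = col x w.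
Proof.
move=> gG; apply/idP/idP => /collinearP[L [xL wL]].
  by apply: (@collinear_inc _ _ ((g.2)^-1 L)); rewrite -(elation_inc _ _ gG) permKV.
by apply: (@collinear_inc _ _ (g.2 L)); rewrite elation_inc.
Qed.

Lemma elation_fix_line g L : g \in G -> inc P L -> g.2 L = L.
Proof.
case: elG => elation _ gG PL; case: (elation g gG) => _ [-> | [fixL _]].
  by rewrite perm1.
exact: fixL.
Qed.

(* Two of the t + 1 >= 2 lines through P are fixed, so is their intersection. *)
Lemma elation_fix_base g : g \in G -> g.1 P = P.
Proof.
move=> gG; case: gqS => _ card_pencil _ _.
have: (1 < #|[set L | inc P L]|)%N by rewrite card_pencil ltnS.
case/card_gt1P => L1 [L2 []]; rewrite !inE => PL1 PL2 L12.
apply/eqP; apply: contraR L12 => gPP; apply/eqP; apply: (line_unique gPP) => //.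
  by rewrite -{1}(elation_fix_line gG PL1) elation_inc.
by rewrite -{1}(elation_fix_line gG PL2) elation_inc.
Qed.

Lemma elation_collinear_base g x : g \in G -> col P (g.1 x) = col P x.
Proof. by move=> gG; rewrite -{1}(elation_fix_base gG) elation_collinear. Qed.

Lemma elation_regular x g h :
  ~~ col P x -> g \in G -> h \in G -> g.1 x = h.1 x -> g = h.
Proof.
case: elG => _ regular Px gG hG gh.
have Pgx : ~~ col P (g.1 x) by rewrite elation_collinear_base.
by have [k [_ eq_k]] := regular x (g.1 x) Px Pgx; rewrite -(eq_k g) // -(eq_k h).
Qed.

Lemma elation_transitive x w :
  ~~ col P x -> ~~ col P w -> exists2 g, g \in G & g.1 x = w.
Proof. by case: elG => _ regular Px Pw; have [g [[]]] := regular x w Px Pw; exists g. Qed.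

Lemma elation_fix_eq1 x g : ~~ col P x -> g \in G -> g.1 x = x -> g = 1.
Proof. by move=> Px gG gx; apply: (elation_regular Px gG (group1 G)); rewrite gx perm1. Qed.

Lemma base_notin_line x N : ~~ col P x -> inc x N -> ~~ inc P N.
Proof. by move=> Px xN; apply: contra Px => PN; apply: collinear_inc PN xN. Qed.

(* The projection of x onto N is fixed by g, so N is the line through it and g x. *)
Lemma elation_fix_line_through x g N :
  ~~ col P x -> g \in G -> inc x N -> inc (g.1 x) N -> g.2 N = N.
Proof.
move=> Px gG xN gxN.
have [u [uN Pu]] := proj_exists (base_notin_line Px xN).
have [L [PL uL]] := collinearP Pu.
have Pgx : ~~ col P (g.1 x) by rewrite elation_collinear_base.
have gxL : ~~ inc (g.1 x) L by apply: contra Pgx; apply: collinear_inc PL.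
have gu : g.1 u = u.
  apply: (proj_unique gxL _ _ uL); last exact: collinear_inc gxN uN.
    by rewrite -(elation_fix_line gG PL) elation_inc.
  by apply: (@collinear_inc _ _ (g.2 N)); rewrite elation_inc.
have gxu : g.1 x != u by apply: contraNneq Pgx => ->.
symmetry; apply: (line_unique gxu gxN uN); first by rewrite elation_inc.
by rewrite -gu elation_inc.
Qed.

Lemma stab_line_group_set N : group_set (stab_line G N).
Proof.
apply/group_setP; split; first by rewrite inE group1 perm1 eqxx.
move=> a b; rewrite !inE => /andP[aG /eqP aN] /andP[bG /eqP bN].
by rewrite groupM //= permM aN bN eqxx.
Qed.
Canonical stab_line_group N := Group (stab_line_group_set N).

Lemma stab_pt_group_set x : group_set (stab_pt G x).
Proof.
apply/group_setP; split; first by rewrite inE group1 perm1 eqxx.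
move=> a b; rewrite !inE => /andP[aG /eqP ax] /andP[bG /eqP bx].
by rewrite groupM //= permM ax bx eqxx.
Qed.
Canonical stab_pt_group x := Group (stab_pt_group_set x).

Lemma stab_line_sub N : stab_line G N \subset G.
Proof. by apply/subsetP => g; rewrite inE => /andP[]. Qed.

Lemma stab_pt_sub x : stab_pt G x \subset G.
Proof. by apply/subsetP => g; rewrite inE => /andP[]. Qed.

(* A_N acts regularly on the s points of N other than its projection u from P. *)
Lemma card_stab_line x N : ~~ col P x -> inc x N -> #|stab_line G N| = s.
Proof.
move=> Px xN; have [u [uN Pu]] := proj_exists (base_notin_line Px xN).
have inj : {in stab_line G N &, injective (fun g : autT Point Line => g.1 x)}.
  by move=> g h; rewrite !inE => /andP[gG _] /andP[hG _]; apply: elation_regular.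
rewrite -(card_in_imset inj).
have -> : [set g.1 x | g : autT Point Line in stab_line G N] = [set w | inc w N] :\ u.
  apply/setP => w; rewrite !inE; apply/imsetP/andP => [[g] | [wu wN]].
    rewrite inE => /andP[gG /eqP gN] ->; split; last by rewrite -gN elation_inc.
    by apply: contraNneq Px => gxu; rewrite -(elation_collinear_base x gG) gxu.
  have Pw : ~~ col P w.
    by apply: contra wu => Pw; rewrite (proj_unique (base_notin_line Px xN) wN Pw uN Pu).
  have [g gG gx] := elation_transitive Px Pw.
  exists g; last by rewrite gx.
  by rewrite inE gG (elation_fix_line_through Px gG xN) ?gx ?eqxx.
case: gqS => card_line _ _ _.
by have := card_line N; rewrite (cardsD1 u) inE uN add1n => -[].
Qed.

Lemma card_other_lines x M : inc x M -> #|[set N | inc x N & N != M]| = t.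
Proof.
move=> xM; case: gqS => _ card_pencil _ _.
have -> : [set N | inc x N & N != M] = [set N | inc x N] :\ M.
  by apply/setP => N; rewrite !inE andbC.
by have := card_pencil x; rewrite (cardsD1 M) inE xM add1n => -[].
Qed.

Variables (y : Point) (M : Line) (z : Point).
Hypotheses (Py : ~~ col P y) (yM : inc y M) (zM : inc z M) (Pz : col P z).

Lemma stab_line_fix_pt g : g \in stab_line G M -> g.1 z = z.
Proof.
rewrite inE => /andP[gG /eqP gM]; apply: (proj_unique (base_notin_line Py yM) _ _ zM Pz).
  by rewrite -gM elation_inc.
by rewrite elation_collinear_base.
Qed.

Lemma stab_line_sub_stab_pt : stab_line G M \subset stab_pt G z.
Proof.
apply/subsetP => g gA; rewrite inE stab_line_fix_pt // eqxx andbT.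
exact: subsetP (stab_line_sub M) g gA.
Qed.

Lemma stab_pt_collinear g : g \in G -> (g.1 z == z) = col (g.1 y) z.
Proof.
move=> gG; apply/eqP/idP => [gz | gyz].
  by rewrite -[X in col _ X]gz elation_collinear //; apply: collinear_inc yM zM.
have [L [PL zL]] := collinearP Pz.
have Pgy : ~~ col P (g.1 y) by rewrite elation_collinear_base.
have gyL : ~~ inc (g.1 y) L by apply: contra Pgy; apply: collinear_inc PL.
apply: (proj_unique gyL _ _ zL gyz); first by rewrite -(elation_fix_line gG PL) elation_inc.
by rewrite elation_collinear //; apply: collinear_inc yM zM.
Qed.

(* Restricting to the lines through y keeps the pieces pairwise disjoint. *)
Definition stab_other_line N :=
  if inc y N && (N != M) then stab_line G N :\ 1 else set0.

Definition coset_reps := \bigcup_N stab_other_line N.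

Lemma elation_moves g : g \in G -> g != 1 -> g.1 y != y.
Proof. by move=> gG; apply: contraNneq => /(elation_fix_eq1 Py gG)->. Qed.

Lemma mem_coset_reps b :
  (b \in coset_reps) = [&& b \in G, b != 1, col y (b.1 y) & ~~ inc (b.1 y) M].
Proof.
apply/bigcupP/idP => [[N _] | /and4P[bG b1 yby byM]].
  rewrite /stab_other_line; case: ifP => [/andP[yN NM] | _]; last by rewrite inE.
  rewrite !inE => /andP[b1 /andP[bG /eqP bN]].
  have byN : inc (b.1 y) N by rewrite -bN elation_inc.
  rewrite bG b1 (collinear_inc yN byN) /=; apply: contra NM => byM; apply/eqP.
  exact: line_unique (elation_moves bG b1) byN yN byM yM.
have [N [yN byN]] := collinearP yby.
exists N => //; rewrite /stab_other_line yN /=.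
have -> : N != M by apply: contraNneq byM => <-.
by rewrite !inE b1 bG (elation_fix_line_through Py bG yN byN) eqxx.
Qed.

Lemma stab_other_line_disjoint N N' :
  N != N' -> [disjoint stab_other_line N & stab_other_line N'].
Proof.
move=> NN'; apply/pred0P => b /=; apply/negP => /andP[].
rewrite /stab_other_line; case: ifP => [/andP[yN _] | _]; last by rewrite in_set0.
case: ifP => [/andP[yN' _] | _ _]; last by rewrite in_set0.
rewrite !inE => /andP[b1 /andP[bG /eqP bN]] /andP[_ /andP[_ /eqP bN']].
have byN : inc (b.1 y) N by rewrite -bN elation_inc.
have byN' : inc (b.1 y) N' by rewrite -bN' elation_inc.
by case/eqP: NN'; apply: line_unique (elation_moves bG b1) byN yN byN' yN'.
Qed.

(* For g outside A^*, a is the element of A_M sending y to the projection of g y on M. *)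
Lemma compl_stab_pt_factor :
  G :\: stab_pt G z = [set p.1 * p.2 | p in setX coset_reps (stab_line G M)].
Proof.
apply/setP => g; apply/idP/imsetP => [| [[b a]]].
  rewrite in_setD inE => /andP[gz gG]; rewrite gG /= stab_pt_collinear // in gz.
  have gyM : ~~ inc (g.1 y) M by apply: contra gz => gyM; apply: collinear_inc gyM zM.
  have [x [xM gyx]] := proj_exists gyM.
  have Px : ~~ col P x.
    by apply: contra gz => Px; rewrite -(proj_unique (base_notin_line Py yM) xM Px zM Pz).
  have [a aG ay] := elation_transitive Py Px.
  have aM : a.2 M = M by apply: (elation_fix_line_through Py aG yM); rewrite ay.
  exists (g * a^-1, a); last by rewrite /= mulgKV.
  have aA : a \in stab_line G M by rewrite inE aG aM eqxx.
  rewrite inE /= aA andbT mem_coset_reps groupM ?groupV //= permM.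
  rewrite -(elation_collinear _ _ aG) -(elation_inc _ M aG) !permKV ay aM.
  rewrite collinearC gyx gyM !andbT; apply: contraNneq gyM => ga.
  by rewrite -(mulgKV a g) ga mul1g ay.
rewrite inE /= mem_coset_reps => /andP[/and4P[bG b1 yby byM] aA] ->.
have aG : a \in G by apply: subsetP (stab_line_sub M) a aA.
rewrite in_setD inE groupM // andbT stab_pt_collinear ?groupM //= permM.
rewrite -[X in col _ X](stab_line_fix_pt aA) elation_collinear //.
apply/negP => byz; move: Py.
by rewrite (proj_unique byM yM _ zM byz) ?Pz // collinearC.
Qed.

Lemma coset_reps_mul_inj :
  {in setX coset_reps (stab_line G M) &, injective (fun p => p.1 * p.2)}.
Proof.
move=> [b a] [b' a']; rewrite !inE /= !mem_coset_reps.
move=> /andP[/and4P[bG _ yby byM] /andP[aG /eqP aM]].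
move=> /andP[/and4P[b'G _ yb'y _] /andP[a'G /eqP a'M]] ba.
have ab_y : a.1 (b.1 y) = a'.1 (b'.1 y).
  by rewrite -!permM -[b.1 * a.1]/((b * a).1) ba.
have ab_notM : ~~ inc (a.1 (b.1 y)) M by rewrite -[X in inc _ X]aM elation_inc.
suff aa' : a = a' by move: ba; rewrite aa' => /mulIg ->.
apply: (elation_regular Py aG a'G); apply: (proj_unique ab_notM).
- by rewrite -aM elation_inc.
- by rewrite elation_collinear // collinearC.
- by rewrite -a'M elation_inc.
- by rewrite ab_y elation_collinear // collinearC.
Qed.

Section CharacterSum.
Local Open Scope ring_scope.
Variables (R : numDomainType) (f : autT Point Line -> R).
Hypotheses (fM : {in G &, {morph f : a b / (a * b)%g >-> a * b}})
  (f_stab : {in stab_line G M, forall a, f a = 1}).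

Let fM_on (K : {set autT Point Line}) :
  K \subset G -> {in K &, {morph f : a b / (a * b)%g >-> a * b}}.
Proof. by move/subsetP => sKG; apply: sub_in2 fM. Qed.

Lemma sum_compl_stab_pt :
  \sum_(g in G :\: stab_pt G z) f g =
    #|stab_line G M|%:R * \sum_(b in coset_reps) f b.
Proof.
rewrite compl_stab_pt_factor (big_imset _ coset_reps_mul_inj) /=.
under eq_bigl do rewrite inE.
rewrite -(pair_big_dep (mem coset_reps) (fun _ a => a \in stab_line G M)
                       (fun b a => f (b * a)%g)) /= mulr_sumr.
apply: eq_bigr => b; rewrite mem_coset_reps => /andP[bG _].
rewrite (eq_bigr (fun=> f b)) => [|a aA]; first by rewrite sumr_const mulr_natl.
by rewrite fM ?(f_stab aA) ?mulr1 //; apply: subsetP (stab_line_sub M) a aA.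
Qed.

Lemma sum_coset_reps :
  \sum_(b in coset_reps) f b =
    \sum_(N in [set N | inc y N & N != M]) (\sum_(a in stab_line G N) f a - 1).
Proof.
rewrite (partition_disjoint_bigcup _ _ stab_other_line_disjoint) [RHS]big_mkcond.
apply: eq_bigr => N _; rewrite /stab_other_line inE; case: ifP => _; last first.
  by rewrite big_set0.
rewrite [X in _ = X - _](big_setD1 1%g) ?group1 //= f_stab ?group1 //.
by rewrite addrC addrK.
Qed.

Lemma stab_pt_mulfun_nontriv_dvdn x : x \in stab_pt G z -> f x != 1 -> (s %| t)%N.
Proof.
move=> xA fx1; have xG := subsetP (stab_pt_sub z) x xA.
have sum_compl : \sum_(g in G :\: stab_pt G z) f g = 0.
  have := sum_mulfun_nontriv fM xG fx1.
  rewrite (big_setID (stab_pt G z)) (setIidPr (stab_pt_sub z)) /=.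
  by rewrite (sum_mulfun_nontriv (fM_on (stab_pt_sub z)) xA fx1) add0r.
move/eqP: sum_compl; rewrite sum_compl_stab_pt mulf_eq0 pnatr_eq0 eqn0Ngt cardG_gt0 /=.
rewrite sum_coset_reps sumrB sumr_const card_other_lines // subr_eq0.
rewrite (eq_bigr (fun N => (s * [forall a in stab_line G N, f a == 1])%:R)).
  by rewrite -natr_sum eqr_nat => /eqP <-; apply: dvdn_sum => N _; apply: dvdn_mulr.
move=> N; rewrite inE => /andP[yN _].
rewrite (sum_mulfun_group (K := stab_line_group N)) ?(card_stab_line Py yN) //.
exact: fM_on (stab_line_sub N).
Qed.

End CharacterSum.

End ElationQuadrangle.

Arguments stab_line_sub {Point Line} G N.
Arguments stab_pt_sub {Point Line} G x.

Theorem corollary2p5 (Point Line : finType) (inc : Point -> Line -> bool)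
  (s t : nat) (P : Point) (G : {group autT Point Line}) :
  (0 < s)%N -> (0 < t)%N ->
  is_GQ inc s t ->
  is_elation_group inc P G ->
  ~~ (s %| t)%N ->
  forall (y : Point) (M : Line) (z : Point),
    ~~ collinear inc P y -> inc y M -> inc z M -> collinear inc P z ->
    stab_pt G z * [~: G, G] = stab_line G M * [~: G, G].
Proof.
move=> _ t_gt0 gqS elG not_dvd_st y M z Py yM zM Pz.
have sAG := stab_line_sub G M.
have nG'A : stab_line G M \subset 'N([~: G, G]).
  exact: subset_trans sAG (normal_norm (der_normal 1 G)).
set H := (stab_line G M <*> [~: G, G])%G.
have defH : H :=: stab_line G M * [~: G, G] by apply: norm_joinEl.
have sG'H : [~: G, G] \subset H := joing_subr _ _.
have nsHG : H <| G by apply: sub_der1_normal; rewrite // join_subG sAG (der_sub 1).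
have sAsH : stab_pt G z \subset H.
  apply/subsetP => x xAs; apply/negPn/negP => xH.
  have xG := subsetP (stab_pt_sub G z) x xAs.
  have [f [fM fH fx1]] := linear_char_separates nsHG sG'H xG xH.
  case/negP: not_dvd_st.
  apply: (stab_pt_mulfun_nontriv_dvdn t_gt0 gqS elG Py yM zM Pz fM _ xAs fx1).
  by move=> a aA; apply: fH; rewrite mem_gen // inE aA.
apply/eqP; rewrite eqEsubset -defH mul_subG //=.
by rewrite defH mulSg // (stab_line_sub_stab_pt t_gt0 gqS elG Py yM zM Pz).
Qed.
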